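(* Let $n\geq3$ and let $S_n$ act on $V=\mathbb{C}^n$ by its natural permutation representation. The subspace of $(H^{2,1}\oplus H^{2,0})^{S_n}$ consisting of elements supported only on $3$-cycles is two-dimensional if $n=3$ and three-dimensional if $n\geq4$.
   Context: $S_n$ acts by $\sigma e_i=e_{\sigma(i)}$. For $g\in S_n$, let $V^g$ be its fixed space, $(V^g)^\perp$ its orthogonal complement (standard bilinear form), $c_g=\operatorname{codim}V^g$; identify $(V^g)^*$ with functionals on $V$ vanishing on $(V^g)^\perp$ and $((V^g)^* )^\perp$ with functionals vanishing on $V^g$. Set $H^{2,d}_g=S^d(V^g)\otimes\bigwedge^{2-c_g}(V^g)^*\otimes\bigwedge^{c_g}((V^g)^* )^\perp\otimes\mathbb{C}g\subseteq S^d(V)\otimes\bigwedge^2V^*\otimes\mathbb{C}g$ (zero if $2-c_g<0$) and $H^{2,d}=\bigoplus_gH^{2,d}_g$, with $S_n$ acting diagonally ($h\cdot(f\otimes\omega\otimes g)=hf\otimes h\omega\otimes hgh^{-1}$). An element is supported only on 3-cycles if its components $H^{2,\bullet}_g$ vanish for all $g$ that are not 3-cycles. *)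

From HB Require Import structures.
From mathcomp Require Import all_boot all_order all_algebra all_fingroup.
Set Implicit Arguments. Unset Strict Implicit. Unset Printing Implicit Defensive.
Import GRing.Theory.
Local Open Scope ring_scope.

(* Ambient field: an arbitrary algebraically closed field with conjugation
   (numClosedFieldType), the MathComp abstraction of the complex numbers. *)

Section Defs.
Variables (C : numClosedFieldType) (n : nat).

(* V = C^n, with coordinates w.r.t. e_0..e_{n-1}; V^* likewise (dual basis). *)
Local Notation vec := {ffun 'I_n -> C^o}.

(* standard bilinear form on V; also the pairing V^* x V *)
Definition bil (u v : vec) : C := \sum_i u i * v i.

(* permutation action  sigma e_i = e_{sigma i}:  (sigma v)_j = v_{sigma^-1 j} *)
Definition pact (h : {perm 'I_n}) (v : vec) : vec := [ffun j => v (h^-1 j)%g].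

Definition is_dim (W : lmodType C) (P : W -> Prop) (k : nat) : Prop :=
  exists b : 'I_k -> W,
    (forall i, P (b i)) /\
    (forall c : 'I_k -> C, \sum_i c i *: b i = 0 -> forall i, c i = 0) /\
    (forall w, P w -> exists c : 'I_k -> C, w = \sum_i c i *: b i).

Definition in_span (W : lmodType C) (P : W -> Prop) (w : W) : Prop :=
  exists m (c : 'I_m -> C) (b : 'I_m -> W),
    (forall i, P (b i)) /\ w = \sum_i c i *: b i.

Definition fixsp (g : {perm 'I_n}) (v : vec) : Prop := pact g v = v.
Definition fixperp (g : {perm 'I_n}) (u : vec) : Prop :=
  forall v, fixsp g v -> bil u v = 0.
(* (V^g)^* : functionals vanishing on (V^g)^perp *)
Definition dual_fix (g : {perm 'I_n}) (phi : vec) : Prop :=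
  forall u, fixperp g u -> bil phi u = 0.
(* ((V^g)^* )^perp : functionals vanishing on V^g *)
Definition dual_perp (g : {perm 'I_n}) (phi : vec) : Prop :=
  forall v, fixsp g v -> bil phi v = 0.

Definition codim_is (g : {perm 'I_n}) (c : nat) : Prop :=
  (c <= n)%N /\ is_dim (fixsp g) (n - c).

(* Lambda^2 V^* : alternating forms, coordinates omega(e_i, e_j) *)
Local Notation form2 := {ffun 'I_n * 'I_n -> C^o}.
Definition wedge (phi psi : vec) : form2 :=
  [ffun ij => phi ij.1 * psi ij.2 - phi ij.2 * psi ij.1].

(* S^1(V) (x) Lambda^2 V^* : coordinates T(k,(i,j)) of e_k (x) omega *)
Local Notation tens3 := {ffun 'I_n * ('I_n * 'I_n) -> C^o}.
Definition tens (s : vec) (w : form2) : tens3 :=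
  [ffun kij => s kij.1 * w kij.2].

(* pairs (phi, psi) whose wedges span
   Lambda^{2-c_g}(V^g)^* (x) Lambda^{c_g}((V^g)^* )^perp  inside Lambda^2 V^*
   (no generators, i.e. the zero space, when c_g > 2) *)
Definition wedge_gen (g : {perm 'I_n}) (phi psi : vec) : Prop :=
  exists c, codim_is g c /\
    [\/ c = 0%N /\ dual_fix g phi /\ dual_fix g psi,
        c = 1%N /\ dual_fix g phi /\ dual_perp g psi
      | c = 2%N /\ dual_perp g phi /\ dual_perp g psi].

(* H^{2,0}_g  (S^0(V^g) = C) *)
Definition H20 (g : {perm 'I_n}) (w : form2) : Prop :=
  in_span (fun w' => exists phi psi, wedge_gen g phi psi /\ w' = wedge phi psi) w.

(* H^{2,1}_g  (S^1(V^g) = V^g) *)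
Definition H21 (g : {perm 'I_n}) (T : tens3) : Prop :=
  in_span (fun T' => exists s phi psi,
              fixsp g s /\ wedge_gen g phi psi /\ T' = tens s (wedge phi psi)) T.

(* ambient space  (bigoplus_g S^1(V) (x) L^2V^* (x) Cg) (+) (bigoplus_g L^2V^* (x) Cg) *)
Definition amb : lmodType C :=
  ({ffun {perm 'I_n} -> tens3} * {ffun {perm 'I_n} -> form2})%type.

Definition inH (x : amb) : Prop := forall g, H21 g (x.1 g) /\ H20 g (x.2 g).

(* diagonal action h.(f (x) omega (x) g) = hf (x) h omega (x) h g h^-1,
   so (h.x)_g = h.(x_{h^-1 g h}).  In MathComp, (h * g * h^-1)%g is the
   permutation  i |-> h^-1 (g (h i)),  i.e. the composite h^-1 o g o h. *)
Definition act (h : {perm 'I_n}) (x : amb) : amb :=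
  ([ffun g => [ffun kij : 'I_n * ('I_n * 'I_n) =>
       x.1 (h * g * h^-1)%g ((h^-1)%g kij.1, ((h^-1)%g kij.2.1, (h^-1)%g kij.2.2))]],
   [ffun g => [ffun ij : 'I_n * 'I_n =>
       x.2 (h * g * h^-1)%g ((h^-1)%g ij.1, (h^-1)%g ij.2)]]).

Definition Sn_invariant (x : amb) : Prop := forall h, act h x = x.

Definition is_3cycle (g : {perm 'I_n}) : Prop :=
  exists a b c : 'I_n,
    [/\ a != b, b != c & a != c] /\ [/\ g a = b, g b = c & g c = a] /\
    (forall i, i \notin [:: a; b; c] -> g i = i).

Definition supp3 (x : amb) : Prop :=
  forall g, ~ is_3cycle g -> x.1 g = 0 /\ x.2 g = 0.

End Defs.

(* For a 3-cycle g = (a b c) the fixed space V^g has codimension 2, so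
   H^{2,d}_g = S^d(V^g) (x) L^2((V^g)^* )^perp, and L^2((V^g)^* )^perp is the line
   spanned by w_g = (e_a - e_b) /\ (e_b - e_c).  An element supported on
   3-cycles therefore has components l_g w_g in degree 0 and s_g (x) w_g with
   s_g in V^g in degree 1.  All 3-cycles are conjugate and g |-> w_g is
   equivariant, so invariance determines everything from one 3-cycle g0: l_g is
   constant, and s_g0, being fixed by g0 and by the transpositions of fixed
   points of g0 (which commute with g0), is constant on the support of g0 and
   constant on its fixed points.  This leaves three invariants, the last of
   which vanishes exactly when n = 3 (g0 has no fixed points); evaluating at
   suitable coordinates of g0 shows that they are independent. *)

From HB Require Import structures.
From mathcomp Require Import all_boot all_order all_algebra all_fingroup zify ring.
Set Implicit Arguments. Unset Strict Implicit. Unset Printing Implicit Defensive.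
Import GRing.Theory.
Local Open Scope ring_scope.

Section Dimension.
Variables (C : numClosedFieldType) (W : lmodType C) (P : W -> Prop).

Lemma is_dim_dual_basis k (b : 'I_k -> W) (f : 'I_k -> W -> C) :
  (forall i, P (b i)) -> (forall i, scalar (f i)) ->
  (forall i j, f i (b j) = (i == j)%:R) ->
  (forall w, P w -> w = \sum_i f i w *: b i) -> is_dim P k.
Proof.
move=> Pb f_lin f_b span; exists b; split=> //; split=> [coef coef_b0 i|w Pw]; last first.
  by exists (fun i => f i w); apply: span.
pose fi : {scalar W} := HB.pack (f i) (GRing.isLinear.Build _ _ _ _ (f i) (f_lin i)).
transitivity (fi (\sum_j coef j *: b j)); last by rewrite coef_b0 linear0.
rewrite linear_sum (bigD1 i) // big1 => [|j ji]; rewrite linearZ /= f_b.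
  by rewrite eqxx mulr1 addr0.
by rewrite eq_sym (negbTE ji) mulr0.
Qed.

Lemma is_dim_leq k1 k2 : is_dim P k1 -> is_dim P k2 -> (k1 <= k2)%N.
Proof.
move=> [b1 [Pb1 [free1 _]]] [b2 [_ [_ span2]]].
have [M b1E] := fin_all_exists (fun i => span2 _ (Pb1 i)).
pose A := \matrix_(i, j) M i j.
have comb (v : 'rV_k1) : \sum_i v 0 i *: b1 i = \sum_j (v *m A) 0 j *: b2 j.
  under eq_bigr do rewrite b1E scaler_sumr.
  rewrite exchange_big; apply: eq_bigr => j _; rewrite !mxE scaler_suml.
  by apply: eq_bigr => i _; rewrite mxE scalerA.
suff /eqP <- : row_free A by exact: rank_leq_col.
apply/inj_row_free => v vA0; apply/rowP => i; rewrite mxE.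
by apply: free1; rewrite comb vA0; apply: big1 => j _; rewrite mxE scale0r.
Qed.

Lemma is_dim_unique k1 k2 : is_dim P k1 -> is_dim P k2 -> k1 = k2.
Proof. by move=> P1 P2; apply/eqP; rewrite eqn_leq !(is_dim_leq P1 P2, is_dim_leq P2 P1). Qed.

End Dimension.

Section ThreeCycles.
Variable T : finType.
Implicit Types (g h : {perm T}) (a b c i : T).

Definition cycle3_at g a b c : bool :=
  [&& [&& a != b, b != c & a != c], [&& g a == b, g b == c & g c == a] &
      [forall i, (i \notin [:: a; b; c]) ==> (g i == i)]].

Definition is_3cycleb g := [exists a, exists b, exists c, cycle3_at g a b c].

Lemma cycle3_atP g a b c :
  reflect ([/\ a != b, b != c & a != c] /\ [/\ g a = b, g b = c & g c = a] /\
           (forall i, i \notin [:: a; b; c] -> g i = i))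
          (cycle3_at g a b c).
Proof.
apply: (iffP and3P) => [[/and3P[ab bc ac] /and3P[/eqP ga /eqP gb /eqP gc] /forallP gi]|].
  by do 2!split=> //; move=> i /(implyP (gi i))/eqP.
move=> [[ab bc ac] [[ga gb gc] gi]]; split; first by apply/and3P.
  by apply/and3P; rewrite ga gb gc.
by apply/forallP => i; apply/implyP => /gi ->.
Qed.

Lemma cycle3_at_cases g a b c j : cycle3_at g a b c ->
  [\/ j = a, j = b, j = c | [/\ j != a, j != b, j != c & g j = j]].
Proof.
case/cycle3_atP=> _ [_ gi].
have [->|ja] := eqVneq j a; first by constructor 1.
have [->|jb] := eqVneq j b; first by constructor 2.
have [->|jc] := eqVneq j c; first by constructor 3.
by constructor 4; split=> //; apply: gi; rewrite !inE negb_or ja negb_or jb jc.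
Qed.

Lemma cycle3_at_moved g a b c j : cycle3_at g a b c -> (g j != j) = (j \in [:: a; b; c]).
Proof.
move=> g_abc; have /cycle3_atP[[ab bc ac] [[ga gb gc] _]] := g_abc.
rewrite !inE; case: (cycle3_at_cases j g_abc) => [->|->|->|[ja jb jc ->]].
- by rewrite ga eq_sym ab eqxx.
- by rewrite gb eq_sym bc eqxx orbT.
- by rewrite gc ac eqxx !orbT.
- by rewrite eqxx (negbTE ja) (negbTE jb) (negbTE jc).
Qed.

Lemma cycle3_at_inj g g' a b c :
  cycle3_at g a b c -> cycle3_at g' a b c -> g = g'.
Proof.
move=> g_abc /cycle3_atP[_ [[ga gb gc] gi]]; have /cycle3_atP[_ [[ga' gb' gc'] _]] := g_abc.
apply/permP => j; case: (cycle3_at_cases j g_abc) => [->|->|->|[ja jb jc ->]].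
- by rewrite ga ga'.
- by rewrite gb gb'.
- by rewrite gc gc'.
by rewrite gi // !inE negb_or ja negb_or jb jc.
Qed.

Lemma cycle3_at_conj h g a b c : cycle3_at g a b c ->
  cycle3_at (h * g * h^-1)%g (h^-1 a)%g (h^-1 b)%g (h^-1 c)%g.
Proof.
case/cycle3_atP => [[ab bc ac] [[ga gb gc] gi]]; apply/cycle3_atP.
rewrite !(inj_eq perm_inj) !permM !permKV ga gb gc; do 2!split=> //.
move=> i i_abc; rewrite !permM gi ?permK //.
by apply: contra i_abc; rewrite !inE => /or3P[]/eqP<-; rewrite permK eqxx ?orbT.
Qed.

Lemma is_3cycleb_conj h g : is_3cycleb (h * g * h^-1)%g = is_3cycleb g.
Proof.
apply/existsP/existsP => [[a /existsP[b /existsP[c]]]|[a /existsP[b /existsP[c]]]].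
  move=> /(cycle3_at_conj h^-1); rewrite invgK !mulgA mulVg mul1g -mulgA mulVg mulg1.
  by exists (h a)%g; apply/existsP; exists (h b)%g; apply/existsP; exists (h c)%g.
move=> /(cycle3_at_conj h) ?.
by exists (h^-1 a)%g; apply/existsP; exists (h^-1 b)%g; apply/existsP; exists (h^-1 c)%g.
Qed.

Lemma cycle3_at_tperm a b c : [&& a != b, b != c & a != c] ->
  cycle3_at (tperm b c * tperm a b)%g a b c.
Proof.
case/and3P=> ab bc ac; have ba : b != a by rewrite eq_sym.
have ca : c != a by rewrite eq_sym.
apply/cycle3_atP; split=> //; split; [split|]; rewrite ?permM.
- by rewrite (tpermD ba ca) tpermL.
- by rewrite tpermL (tpermD ac bc).
- by rewrite !tpermR.
move=> i; rewrite !inE !negb_or !(eq_sym i) => /and3P[ai bi ci].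
by rewrite permM (tpermD bi ci) (tpermD ai bi).
Qed.

Lemma exists_perm3 a0 b0 c0 a b c : [&& a0 != b0, b0 != c0 & a0 != c0] ->
  [&& a != b, b != c & a != c] -> exists h, [/\ h a0 = a, h b0 = b & h c0 = c].
Proof.
case/and3P=> ab0 bc0 ac0 /and3P[ab bc ac].
pose p1 := tperm a0 a; pose p2 := tperm (p1 b0) b; pose p3 := tperm (p2 (p1 c0)) c.
have p1a0 : p1 a0 = a by rewrite tpermL.
have p2b : p2 (p1 b0) = b by rewrite tpermL.
have p2a : p2 a = a.
  have p1b0 : p1 b0 != a by rewrite -p1a0 (inj_eq perm_inj) eq_sym.
  by rewrite tpermD // eq_sym.
have p3a : p3 a = a.
  have p21c0 : p2 (p1 c0) != a by rewrite -p2a -p1a0 !(inj_eq perm_inj) eq_sym.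
  by rewrite tpermD // eq_sym.
have p3b : p3 b = b.
  have p21c0 : p2 (p1 c0) != b by rewrite -p2b !(inj_eq perm_inj) eq_sym.
  by rewrite tpermD // eq_sym.
by exists (p1 * p2 * p3)%g; rewrite !permM p1a0 p2a p3a p2b p3b tpermL.
Qed.

Lemma conjugate_3cycles g0 a0 b0 c0 g : cycle3_at g0 a0 b0 c0 -> is_3cycleb g ->
  exists h, (h * g * h^-1)%g = g0.
Proof.
move=> g0_abc /existsP[a /existsP[b /existsP[c g_abc]]].
have /and3P[dist0 _ _] := g0_abc; have /and3P[dist _ _] := g_abc.
have [h [ha hb hc]] := exists_perm3 dist0 dist.
have := cycle3_at_conj h g_abc; rewrite -ha -hb -hc !permK => hgh_abc.
by exists h; apply: cycle3_at_inj hgh_abc g0_abc.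
Qed.

End ThreeCycles.

Section InSpan.
Variables (C : numClosedFieldType) (U W : lmodType C) (P : W -> Prop).

Lemma in_span0 : in_span P 0.
Proof. by exists 0%N, (fun=> 0), (fun=> 0); split; [case | rewrite big_ord0]. Qed.

Lemma in_span_gen w : P w -> in_span P w.
Proof. by exists 1%N, (fun=> 1), (fun=> w); rewrite big_ord1 scale1r. Qed.

Lemma in_span_linear_image (Q : U -> Prop) (F : U -> W) :
  Q 0 -> (forall a u v, Q u -> Q v -> Q (a *: u + v)) -> linear F ->
  (forall w, P w -> exists2 u, Q u & w = F u) ->
  forall w, in_span P w -> exists2 u, Q u & w = F u.
Proof.
move=> Q0 Q_lin F_lin P_F w [m [c [b [Pb ->]]]].
pose Fl : {linear U -> W} := HB.pack F (GRing.isLinear.Build _ _ _ _ F F_lin).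
apply: (big_ind (fun w => exists2 u, Q u & w = F u)) => [|_ _ [u Qu ->] [v Qv ->]|i _].
- by exists 0; rewrite // -[F 0]/(Fl 0) linear0.
- by exists (1 *: u + v); [apply: Q_lin | rewrite F_lin scale1r].
have [u Qu ->] := P_F _ (Pb i).
by exists (c i *: u + 0); [apply: Q_lin | rewrite F_lin -[F 0]/(Fl 0) linear0 addr0].
Qed.

End InSpan.

Section PermutationRepresentation.
Variables (C : numClosedFieldType) (n : nat).
Local Notation vec := {ffun 'I_n -> C^o}.
Local Notation form2 := {ffun 'I_n * 'I_n -> C^o}.
Implicit Types (g h : {perm 'I_n}) (a b c k : 'I_n) (u v phi psi : vec).

Lemma regular_scaleE (x y : C) : x *: (y : C^o) = x * y.
Proof. by []. Qed.

Lemma sum_scale_ffunE (aT : finType) m (coef : 'I_m -> C) (f : 'I_m -> {ffun aT -> C^o}) x :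
  (\sum_i coef i *: f i) x = \sum_i coef i * f i x.
Proof. by rewrite sum_ffunE; apply: eq_bigr => i _; rewrite ffunE. Qed.

Lemma is_3cycleP g : reflect (is_3cycle g) (is_3cycleb g).
Proof.
apply: (iffP existsP) => [[a /existsP[b /existsP[c /cycle3_atP g_abc]]]|[a [b [c g_abc]]]].
  by exists a, b, c.
by exists a; apply/existsP; exists b; apply/existsP; exists c; apply/cycle3_atP.
Qed.

Definition unit_vec k : vec := [ffun j => (j == k)%:R].

Lemma bil_unit_vecr phi k : bil phi (unit_vec k) = phi k.
Proof.
rewrite /bil (bigD1 k) //= ffunE eqxx mulr1 big1 ?addr0 // => j jk.
by rewrite ffunE (negbTE jk) mulr0.
Qed.

Lemma bil_unit_vecl k v : bil (unit_vec k) v = v k.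
Proof. by rewrite /bil; under eq_bigr do rewrite mulrC; exact: bil_unit_vecr. Qed.

Lemma bilBl u v w : bil (u - v) w = bil u w - bil v w.
Proof. by rewrite /bil -sumrB; apply: eq_bigr => i _; rewrite !ffunE mulrBl. Qed.

Lemma bilDr phi u v : bil phi (u + v) = bil phi u + bil phi v.
Proof. by rewrite /bil -big_split; apply: eq_bigr => i _; rewrite ffunE mulrDr. Qed.

Lemma fixspP g v : fixsp g v <-> forall k, v (g k) = v k.
Proof.
split=> [gv k | gv]; first by rewrite -{1}gv ffunE permK.
by apply/ffunP => j; rewrite ffunE -{2}(permKV g j) gv.
Qed.

Lemma fixsp_unit_vec g k : g k = k -> fixsp g (unit_vec k).
Proof. by move=> gk; apply/fixspP => j; rewrite !ffunE -{1}gk (inj_eq perm_inj). Qed.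

Definition support_ind g (t : bool) : vec := [ffun k => ((g k != k) == t)%:R].

Lemma fixsp_support_ind g t : fixsp g (support_ind g t).
Proof. by apply/fixspP => j; rewrite !ffunE (inj_eq perm_inj). Qed.

Lemma support_ind_conj h g t k :
  support_ind (h * g * h^-1)%g t (h^-1 k)%g = support_ind g t k.
Proof. by rewrite !ffunE !permM permKV (inj_eq perm_inj). Qed.

Lemma fixsp0 g : fixsp g (0 : vec).
Proof. by apply/fixspP => k; rewrite !ffunE. Qed.

Lemma fixsp_lincomb g x u v : fixsp g u -> fixsp g v -> fixsp g (x *: u + v).
Proof. by move=> /fixspP gu /fixspP gv; apply/fixspP => k; rewrite !ffunE gu gv. Qed.

Lemma tens_linear (w : form2) : linear (fun s : vec => tens s w).
Proof. by move=> x u v; apply/ffunP => kij; rewrite !ffunE !regular_scaleE mulrDl mulrA. Qed.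

Lemma tensE s (w : form2) k i j : tens s w (k, (i, j)) = s k * w (i, j).
Proof. by rewrite ffunE. Qed.

Lemma tensZr s (l : C) (w : form2) : tens s (l *: w) = tens (l *: s) w.
Proof. by apply/ffunP => kij; rewrite !ffunE !regular_scaleE mulrCA mulrA. Qed.

(* For g = (a b c) this is (e_a - e_b) /\ (e_b - e_c) (cycle_form_cycle3),
   written in a form that depends on g alone. *)
Definition cycle_form g : form2 :=
  [ffun ij => if g ij.1 != ij.1 then (ij.2 == g ij.1)%:R - (ij.1 == g ij.2)%:R else 0].

Lemma cycle_form_conj h g i j :
  cycle_form (h * g * h^-1)%g ((h^-1 i)%g, (h^-1 j)%g) = cycle_form g (i, j).
Proof. by rewrite !ffunE /= !permM !permKV !(inj_eq perm_inj). Qed.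

Ltac rewrite_neqs := repeat match goal with
  | H : is_true (?x != ?y) |- context [?x == ?y] => rewrite (negbTE H)
  | H : is_true (?x != ?y) |- context [?y == ?x] => rewrite (eq_sym y x) (negbTE H)
  end.

Section ThreeCycle.
Variables (g : {perm 'I_n}) (a b c : 'I_n).
Hypothesis g_abc : cycle3_at g a b c.

Lemma fixsp_cycle3 v : fixsp g v -> v b = v a /\ v c = v a.
Proof.
have /cycle3_atP[_ [[ga gb _] _]] := g_abc.
by move/fixspP => gv; rewrite -gb gv -ga gv.
Qed.

Lemma fixsp_cycle3_eq u v : fixsp g u -> fixsp g v ->
  (forall k, k != b -> k != c -> u k = v k) -> u = v.
Proof.
have /cycle3_atP[[ab _ ac] _] := g_abc.
move=> /fixsp_cycle3[ub uc] /fixsp_cycle3[vb vc] uv; apply/ffunP => k.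
have [->|kb] := eqVneq k b; first by rewrite ub vb uv // eq_sym.
have [->|kc] := eqVneq k c; first by rewrite uc vc uv // eq_sym.
exact: uv.
Qed.

Let S := ~: [set b; c].

Let a_in_S : a \in S.
Proof. by rewrite !inE negb_or; case/and3P: g_abc => /and3P[-> _ ->]. Qed.

Lemma card_fixsp_index : #|S| = (n - 2)%N.
Proof.
have /cycle3_atP[[_ bc _] _] := g_abc.
by have := cardsC [set b; c]; rewrite cards2 bc card_ord /S; lia.
Qed.

Lemma dim_fixsp_cycle3 : is_dim (@fixsp C n g) (n - 2).
Proof.
(* e_a + e_b + e_c and the e_k for k fixed, indexed by the complement of {b, c} *)
pose basis (i : 'I_#|S|) := if enum_val i == a then support_ind g true else unit_vec (enum_val i).
have basisE (i j : 'I_#|S|) : basis j (enum_val i) = (i == j)%:R.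
  have := enum_valP i; rewrite !inE negb_or => /andP[ib ic].
  rewrite /basis -(inj_eq enum_val_inj); case: eqP => [-> | _]; last by rewrite ffunE.
  by rewrite ffunE (cycle3_at_moved _ g_abc) !inE (negbTE ib) (negbTE ic) !orbF eqb_id.
have basis_fix i : fixsp g (basis i).
  rewrite /basis; case: eqP => [_ | ia]; first exact: fixsp_support_ind.
  apply: fixsp_unit_vec; apply/eqP/negPn.
  rewrite (cycle3_at_moved _ g_abc) !inE !negb_or (introN eqP ia).
  by have := enum_valP i; rewrite !inE negb_or.
rewrite -card_fixsp_index; apply: (@is_dim_dual_basis _ _ _ _ basis (fun i v => v (enum_val i))).
- exact: basis_fix.
- by move=> i x u v; rewrite !ffunE.
- by move=> i j; rewrite basisE.
move=> v gv; apply: fixsp_cycle3_eq => // [|k kb kc].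
  apply/fixspP => k; rewrite !sum_scale_ffunE; apply: eq_bigr => i _.
  by have /fixspP -> := basis_fix i.
have kS : k \in S by rewrite !inE negb_or kb kc.
rewrite -(enum_rankK_in a_in_S kS) sum_scale_ffunE (bigD1 (enum_rank_in a_in_S k)) //= big1 => [|i ik].
  by rewrite basisE eqxx mulr1 addr0.
by rewrite basisE eq_sym (negbTE ik) mulr0.
Qed.

Let n_gt2 : (2 < n)%N.
Proof.
have S_gt0 : (0 < #|S|)%N by apply/card_gt0P; exists a.
by move: S_gt0; rewrite card_fixsp_index; lia.
Qed.

Lemma codim_cycle3 (m : nat) : codim_is C g m -> m = 2%N.
Proof. by case=> ? /(is_dim_unique dim_fixsp_cycle3); lia. Qed.

Lemma support_ind_cycle3 : support_ind g true = unit_vec a + unit_vec b + unit_vec c.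
Proof.
have /cycle3_atP[[ab bc ac] [[ga gb gc] _]] := g_abc.
apply/ffunP => k; rewrite !ffunE eqb_id.
case: (cycle3_at_cases k g_abc) => [->|->|->|[ka kb kc ->]];
  rewrite ?ga ?gb ?gc ?eqxx; rewrite_neqs; rewrite /=; ring.
Qed.

Lemma dual_perp_cycle3 phi : dual_perp g phi ->
  (forall k, g k = k -> phi k = 0) /\ phi c = - phi a - phi b.
Proof.
move=> phi_perp; split=> [k gk|]; first by rewrite -bil_unit_vecr; apply/phi_perp/fixsp_unit_vec.
have := phi_perp _ (fixsp_support_ind g true).
rewrite support_ind_cycle3 !bilDr !bil_unit_vecr => sum0.
by apply/eqP; rewrite -subr_eq0 -sum0; apply/eqP; ring.
Qed.

Lemma cycle_form_cycle3 : cycle_form g = wedge (unit_vec a - unit_vec b) (unit_vec b - unit_vec c).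
Proof.
have /cycle3_atP[[ab bc ac] [[ga gb gc] _]] := g_abc.
apply/ffunP => -[i j]; rewrite !ffunE /=.
case: (cycle3_at_cases i g_abc) => [->|->|->|[ia ib ic ->]];
case: (cycle3_at_cases j g_abc) => [->|->|->|[ja jb jc ->]];
  rewrite ?ga ?gb ?gc ?eqxx; rewrite_neqs; rewrite /=; ring.
Qed.

Lemma wedge_dual_perp phi psi : dual_perp g phi -> dual_perp g psi ->
  wedge phi psi = wedge phi psi (a, b) *: cycle_form g.
Proof.
have /cycle3_atP[[ab bc ac] [[ga gb gc] _]] := g_abc.
move=> /dual_perp_cycle3[phi0 phic] /dual_perp_cycle3[psi0 psic].
apply/ffunP => -[i j]; rewrite !ffunE /=.
case: (cycle3_at_cases i g_abc) => [->|->|->|[ia ib ic gi]];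
case: (cycle3_at_cases j g_abc) => [->|->|->|[ja jb jc gj]];
  rewrite ?phic ?psic; try rewrite (phi0 _ gi) (psi0 _ gi);
  try rewrite (phi0 _ gj) (psi0 _ gj);
  rewrite ?ga ?gb ?gc ?gi ?gj ?eqxx; rewrite_neqs; rewrite /= regular_scaleE; ring.
Qed.

Lemma cycle_form_cycle3_ab : cycle_form g (a, b) = 1.
Proof.
have /cycle3_atP[[ab _ ac] [[ga gb _] _]] := g_abc.
by rewrite ffunE /= ga gb eq_sym ab eqxx (negbTE ac) subr0.
Qed.

Lemma wedge_gen_cycle3 phi psi : wedge_gen g phi psi -> dual_perp g phi /\ dual_perp g psi.
Proof. by case=> m [/codim_cycle3 -> []] [] // _. Qed.

Lemma wedge_gen_cycle_form :
  wedge_gen g (unit_vec a - unit_vec b) (unit_vec b - unit_vec c).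
Proof.
exists 2%N; split; first by split; [exact: ltnW | exact: dim_fixsp_cycle3].
by constructor 3; split=> //; split=> v /fixsp_cycle3[vb vc];
  rewrite bilBl !bil_unit_vecl ?vb ?vc subrr.
Qed.

Lemma H20_cycle_form : H20 g (cycle_form g).
Proof.
apply: in_span_gen; exists (unit_vec a - unit_vec b), (unit_vec b - unit_vec c).
by rewrite cycle_form_cycle3; split=> //; exact: wedge_gen_cycle_form.
Qed.

Lemma H21_tens_cycle_form s : fixsp g s -> H21 g (tens s (cycle_form g)).
Proof.
move=> gs; apply: in_span_gen; exists s, (unit_vec a - unit_vec b), (unit_vec b - unit_vec c).
by rewrite cycle_form_cycle3; split=> //; split=> //; exact: wedge_gen_cycle_form.
Qed.

Lemma H20_cycle3 w : H20 g w -> w = w (a, b) *: cycle_form g.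
Proof.
move=> w_H20; suff [l _ ->] : exists2 l : C^o, True & w = l *: cycle_form g.
  by rewrite ffunE cycle_form_cycle3_ab regular_scaleE mulr1.
apply: (in_span_linear_image _ _ _ _ w_H20) => // [x u v|_ [phi [psi [/wedge_gen_cycle3[? ?] ->]]]].
  by rewrite scalerDl scalerA.
by exists (wedge phi psi (a, b)) => //; exact: wedge_dual_perp.
Qed.

Lemma H21_cycle3 T : H21 g T ->
  fixsp g [ffun k => T (k, (a, b))] /\ T = tens [ffun k => T (k, (a, b))] (cycle_form g).
Proof.
move=> T_H21; suff [s gs ->] : exists2 s, fixsp g s & T = tens s (cycle_form g).
  suff -> : [ffun k => tens s (cycle_form g) (k, (a, b))] = s by [].
  by apply/ffunP => k; rewrite ffunE tensE cycle_form_cycle3_ab mulr1.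
apply: (in_span_linear_image (fixsp0 g) (@fixsp_lincomb g) (tens_linear _) _ T_H21).
move=> _ [s [phi [psi [gs [/wedge_gen_cycle3[? ?] ->]]]]].
exists (wedge phi psi (a, b) *: s + 0); first exact/fixsp_lincomb/fixsp0.
by rewrite addr0 -tensZr -wedge_dual_perp.
Qed.

End ThreeCycle.
End PermutationRepresentation.

Section Invariants.
Variables (C : numClosedFieldType) (n : nat).
Local Notation amb := (amb C n).
Implicit Types (g h : {perm 'I_n}) (a b c i j k : 'I_n) (x : amb).

Definition inv_supp3 x : Prop := inH x /\ Sn_invariant x /\ supp3 x.

Lemma Sn_invariant_conj1 x h g k i j : Sn_invariant x ->
  x.1 (h * g * h^-1)%g ((h^-1 k)%g, ((h^-1 i)%g, (h^-1 j)%g)) = x.1 g (k, (i, j)).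
Proof. by move=> x_inv; rewrite -{2}(x_inv h) !ffunE. Qed.

Lemma Sn_invariant_conj2 x h g i j : Sn_invariant x ->
  x.2 (h * g * h^-1)%g ((h^-1 i)%g, (h^-1 j)%g) = x.2 g (i, j).
Proof. by move=> x_inv; rewrite -{2}(x_inv h) !ffunE. Qed.

Definition omega20 : amb :=
  (0, [ffun g => if is_3cycleb g then cycle_form C g else 0]).

Definition omega21 (t : bool) : amb :=
  ([ffun g => if is_3cycleb g then tens (support_ind C g t) (cycle_form C g) else 0], 0).

Lemma omega20_inv_supp3 : inv_supp3 omega20.
Proof.
split; [|split].
- move=> g; rewrite !ffunE; split; first exact: in_span0.
  case: ifP => [/existsP[a /existsP[b /existsP[c g_abc]]] | _]; last exact: in_span0.
  exact: H20_cycle_form g_abc.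
- move=> h; congr pair; apply/ffunP => g; apply/ffunP => -[i j]; rewrite !ffunE //=.
  by rewrite is_3cycleb_conj; case: ifP => _; [exact: cycle_form_conj | rewrite !ffunE].
- by move=> g /(introN (is_3cycleP g))/negbTE g3; rewrite !ffunE g3.
Qed.

Lemma omega21_inv_supp3 t : inv_supp3 (omega21 t).
Proof.
split; [|split].
- move=> g; rewrite !ffunE; split; last exact: in_span0.
  case: ifP => [/existsP[a /existsP[b /existsP[c g_abc]]] | _]; last exact: in_span0.
  exact/(H21_tens_cycle_form g_abc)/fixsp_support_ind.
- move=> h; congr pair; apply/ffunP => g; apply/ffunP => -[k [i j]]; rewrite !ffunE //=.
  rewrite is_3cycleb_conj; case: ifP => _; last by rewrite !ffunE.
  by rewrite !tensE support_ind_conj cycle_form_conj.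
- by move=> g /(introN (is_3cycleP g))/negbTE g3; rewrite !ffunE g3.
Qed.

End Invariants.

Section Reference.
Variables (C : numClosedFieldType) (n : nat).
Local Notation amb := (amb C n).
Variables (g0 : {perm 'I_n}) (a0 b0 c0 : 'I_n).
Hypothesis g0_abc : cycle3_at g0 a0 b0 c0.
Implicit Types (g h : {perm 'I_n}) (i j k : 'I_n) (x : amb).

Section Decomposition.
Variable x : amb.
Hypothesis x_inv : inv_supp3 x.

Lemma inv_supp3_form g i j : is_3cycleb g ->
  x.2 g (i, j) = x.2 g0 (a0, b0) * cycle_form C g (i, j).
Proof.
case: x_inv => [x_H [x_Sn _]] /(conjugate_3cycles g0_abc)[h hg].
rewrite -(Sn_invariant_conj2 h g i j x_Sn) hg [in LHS](H20_cycle3 g0_abc (proj2 (x_H g0))).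
by rewrite ffunE regular_scaleE -hg cycle_form_conj.
Qed.

Lemma inv_supp3_tens g k i j : is_3cycleb g -> exists2 k0,
  (g0 k0 == k0) = (g k == k) & x.1 g (k, (i, j)) = x.1 g0 (k0, (a0, b0)) * cycle_form C g (i, j).
Proof.
case: x_inv => [x_H [x_Sn _]] /(conjugate_3cycles g0_abc)[h hg].
exists (h^-1 k)%g; first by rewrite -hg !permM permKV (inj_eq perm_inj).
have [_ x_tens] := H21_cycle3 g0_abc (proj1 (x_H g0)).
rewrite -(Sn_invariant_conj1 h g k i j x_Sn) hg [in LHS]x_tens.
by rewrite tensE ffunE -hg cycle_form_conj.
Qed.

Lemma inv_supp3_moved k0 : g0 k0 != k0 -> x.1 g0 (k0, (a0, b0)) = x.1 g0 (a0, (a0, b0)).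
Proof.
case: x_inv => [x_H _]; have [s_fix _] := H21_cycle3 g0_abc (proj1 (x_H g0)).
have [b_a c_a] := fixsp_cycle3 g0_abc s_fix; rewrite !ffunE in b_a c_a.
by rewrite (cycle3_at_moved _ g0_abc) !inE => /or3P[] /eqP->.
Qed.

Lemma inv_supp3_fixed d d' : g0 d = d -> g0 d' = d' ->
  x.1 g0 (d, (a0, b0)) = x.1 g0 (d', (a0, b0)).
Proof.
have not_abc u : g0 u = u -> [/\ u != a0, u != b0 & u != c0].
  move=> g0u; have := cycle3_at_moved u g0_abc.
  by rewrite g0u eqxx !inE => /esym/norP[? /norP[? ?]].
move=> /not_abc[ad bd cd] /not_abc[ad' bd' cd']; have [_ [x_Sn _]] := x_inv.
pose h := tperm d d'. (* it commutes with g0 *)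
have hg0 : (h * g0 * h^-1)%g = g0.
  apply: cycle3_at_inj g0_abc.
  by have := cycle3_at_conj h g0_abc; rewrite tpermV !tpermD.
by rewrite -(Sn_invariant_conj1 h g0 d a0 b0 x_Sn) hg0 tpermV tpermL !tpermD.
Qed.

Lemma inv_supp3_decomposition beta :
  (forall d, g0 d = d -> x.1 g0 (d, (a0, b0)) = beta) ->
  x = x.2 g0 (a0, b0) *: omega20 C n + x.1 g0 (a0, (a0, b0)) *: omega21 C n true
      + beta *: omega21 C n false.
Proof.
move=> x_fixed; have [_ [_ x_supp]] := x_inv.
apply: injective_projections => /=; apply/ffunP => g.
  apply/ffunP => -[k [i j]]; rewrite !ffunE /=.
  case g3: (is_3cycleb g); last first.
    by have [-> _] := x_supp g (elimF (is_3cycleP g) g3); rewrite !ffunE !scaler0 !addr0.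
  have [k0 k0g ->] := inv_supp3_tens k i j g3; rewrite !tensE !ffunE !regular_scaleE.
  have [gk | gk] := eqVneq (g k) k.
    by rewrite x_fixed /=; [ring | apply/eqP; rewrite k0g gk].
  by rewrite inv_supp3_moved ?k0g //=; ring.
apply/ffunP => -[i j]; rewrite !ffunE /=.
case g3: (is_3cycleb g); last first.
  by have [_ ->] := x_supp g (elimF (is_3cycleP g) g3); rewrite !ffunE !scaler0 !addr0.
by rewrite inv_supp3_form // !ffunE !regular_scaleE; ring.
Qed.

End Decomposition.

Definition coord20 (y : amb) : C := y.2 g0 (a0, b0).
Definition coord21 k (y : amb) : C := y.1 g0 (k, (a0, b0)).

Let g0_3cycle : is_3cycleb g0.
Proof. by apply/existsP; exists a0; apply/existsP; exists b0; apply/existsP; exists c0. Qed.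

Lemma coord20_omega20 : coord20 (omega20 C n) = 1.
Proof. by rewrite /coord20 ffunE g0_3cycle (cycle_form_cycle3_ab _ g0_abc). Qed.

Lemma coord21_omega20 k : coord21 k (omega20 C n) = 0.
Proof. by rewrite /coord21 !ffunE. Qed.

Lemma coord20_omega21 t : coord20 (omega21 C n t) = 0.
Proof. by rewrite /coord20 !ffunE. Qed.

Lemma coord21_omega21 k t : coord21 k (omega21 C n t) = ((g0 k != k) == t)%:R.
Proof.
by rewrite /coord21 ffunE g0_3cycle tensE ffunE (cycle_form_cycle3_ab _ g0_abc) mulr1.
Qed.

Lemma scalar_coord20 : scalar coord20.
Proof. by move=> l u v; rewrite /coord20 /= !ffunE. Qed.

Lemma scalar_coord21 k : scalar (coord21 k).
Proof. by move=> l u v; rewrite /coord21 /= !ffunE. Qed.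

Let g0_a0 : g0 a0 != a0.
Proof. by rewrite (cycle3_at_moved _ g0_abc) mem_head. Qed.

Lemma dim_inv_supp3_fixed d0 : g0 d0 = d0 -> is_dim (@inv_supp3 C n) 3.
Proof.
move=> g0d0.
pose b (i : 'I_3) := [:: omega20 C n; omega21 C n true; omega21 C n false]`_i.
pose f (i : 'I_3) := nth coord20 [:: coord20; coord21 a0; coord21 d0] i.
apply: (@is_dim_dual_basis _ _ _ _ b f).
- case=> [[|[|[|//]]] ?]; rewrite /b /=;
    [exact: omega20_inv_supp3 | exact: omega21_inv_supp3 ..].
- by case=> [[|[|[|//]]] ?]; [exact: scalar_coord20 | exact: scalar_coord21 ..].
- case=> [[|[|[|//]]] ?] [[|[|[|//]]] ?];
    rewrite /f /b /= ?coord20_omega20 ?coord20_omega21 ?coord21_omega20 ?coord21_omega21 //;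
    by rewrite ?g0d0 ?eqxx ?g0_a0.
move=> x x_inv; rewrite !big_ord_recl big_ord0 addr0 /b /f /= addrA.
exact: inv_supp3_decomposition x_inv (coord21 d0 x) (fun d gd => inv_supp3_fixed x_inv gd g0d0).
Qed.

Lemma dim_inv_supp3_nofixed : (forall d, g0 d != d) -> is_dim (@inv_supp3 C n) 2.
Proof.
move=> g0_nofix.
pose b (i : 'I_2) := [:: omega20 C n; omega21 C n true]`_i.
pose f (i : 'I_2) := nth coord20 [:: coord20; coord21 a0] i.
apply: (@is_dim_dual_basis _ _ _ _ b f).
- case=> [[|[|//]] ?]; [exact: omega20_inv_supp3 | exact: omega21_inv_supp3].
- by case=> [[|[|//]] ?]; [exact: scalar_coord20 | exact: scalar_coord21].
- case=> [[|[|//]] ?] [[|[|//]] ?];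
    by rewrite /f /b /= ?coord20_omega20 ?coord20_omega21 ?coord21_omega20 ?coord21_omega21 ?g0_a0.
move=> x x_inv; rewrite !big_ord_recl big_ord0 addr0 /b /f /=.
rewrite {1}(inv_supp3_decomposition x_inv (beta := 0)) ?scale0r ?addr0 // => d /eqP.
by rewrite (negbTE (g0_nofix d)).
Qed.

End Reference.

Local Close Scope ring_scope.

Theorem lemma4p5 (C : numClosedFieldType) (n : nat) (hn : (3 <= n)%N) :
  is_dim (fun x : amb C n => inH x /\ Sn_invariant x /\ supp3 x)
         (if n == 3 then 2 else 3).
Proof.
pose a0 : 'I_n := Ordinal (ltnW (ltnW hn)).
pose b0 : 'I_n := Ordinal (ltnW hn).
pose c0 : 'I_n := Ordinal hn.
have g0_abc := @cycle3_at_tperm _ a0 b0 c0 isT.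
case: eqP => [n3 | /eqP n_ne3].
  apply: (dim_inv_supp3_nofixed C g0_abc) => d.
  rewrite (cycle3_at_moved _ g0_abc) !inE -!val_eqE /=.
  by have := ltn_ord d; lia.
have hn4 : 3 < n by lia.
apply: (dim_inv_supp3_fixed C g0_abc (d0 := Ordinal hn4)).
by apply/eqP/negPn; rewrite (cycle3_at_moved _ g0_abc).
Qed.
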